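(* Let $\mathbb{A}$ be a 2-category and $l:b\to e$ a 1-cell such that (1) $\mathbb{A}$ has the two-dimensional cokernel diagram of $l$ (with opcomma object $e\uparrow_l e$ and universal 1-cells $\delta^0,\delta^1:e\to e\uparrow_le$); (2) a left Kan extension of $l$ along $l$ exists (i.e. $l$ has a density comonad); (3) this left Kan extension is preserved by $\delta^1:e\to e\uparrow_le$. Then the co-semantic factorization of $l$ is isomorphic to the semantic lax descent factorization of $l$, either one existing if the other does.
   Context: A 2-category is a $\mathbf{Cat}$-enriched category; composition of 1-cells is juxtaposition, vertical composition of 2-cells is $\cdot$, horizontal composition is $\ast$, $\mathrm{id}_f$ is the identity 2-cell on $f$. $\mathbb{A}^{\mathrm{co}}$ is the 2-category obtained from $\mathbb{A}$ by reversing the 2-cells. For a 1-cell $p:e\to b$ (here applied with $l$ in place of $p$, $b$ replaced by $e$ and $e$ by $b$): an opcomma object of $p$ along itself is $b\uparrow_p b$ with $\delta^0,\delta^1:b\to b\uparrow_p b$ and $\alpha:\delta^1p\Rightarrow\delta^0p$ such that for every $y$, $h\mapsto(h\delta^0,h\delta^1,\mathrm{id}_h\ast\alpha)$, $\xi\mapsto(\xi\ast\mathrm{id}_{\delta^0},\xi\ast\mathrm{id}_{\delta^1})$ is an isomorphism from $\mathbb{A}(b\uparrow_pb,y)$ onto the category of triples $(h_0,h_1:b\to y,\beta:h_1p\Rightarrow h_0p)$ with morphisms pairs $(\xi_0,\xi_1)$ satisfying $(\xi_0\ast\mathrm{id}_p)\cdot\beta=\beta'\cdot(\xi_1\ast\mathrm{id}_p)$.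 A two-dimensional pushout of a span $f_0:c\to c_0$, $f_1:c\to c_1$ is $P$ with $q_0,q_1$, $q_0f_0=q_1f_1$, such that $k\mapsto(kq_0,kq_1)$ is an isomorphism from $\mathbb{A}(P,y)$ onto the category of pairs $(k_0,k_1)$ with $k_0f_0=k_1f_1$ and morphisms pairs of 2-cells $(\xi_0,\xi_1)$ with $\xi_0\ast\mathrm{id}_{f_0}=\xi_1\ast\mathrm{id}_{f_1}$. $\mathbb{A}$ has the two-dimensional cokernel diagram of $p$ if it has $b\uparrow_pb$ and a two-dimensional pushout $b\uparrow_pb\uparrow_pb$ of $(\delta^0,\delta^1)$ with $D^0,D^2$, $D^2\delta^0=D^0\delta^1$; $D^1$ is the unique 1-cell with $D^1\delta^1=D^2\delta^1$, $D^1\delta^0=D^0\delta^0$, $\mathrm{id}_{D^1}\ast\alpha=(\mathrm{id}_{D^0}\ast\alpha)\cdot(\mathrm{id}_{D^2}\ast\alpha)$; $s^0$ is the unique 1-cell with $s^0\delta^0=s^0\delta^1=\mathrm{id}_b$, $\mathrm{id}_{s^0}\ast\alpha=\mathrm{id}_p$. Semantic lax descent factorization: $\mathrm{Desc}_p(y)$ has objects $(h:y\to b,\beta:\delta^1h\Rightarrow\delta^0h)$ with $(\mathrm{id}_{D^0}\ast\beta)\cdot(\mathrm{id}_{D^2}\ast\beta)=\mathrm{id}_{D^1}\ast\beta$, $\mathrm{id}_{s^0}\ast\beta=\mathrm{id}_h$, morphisms 2-cells $\xi:h_1\Rightarrow h_0$ with $\beta_0\cdot(\mathrm{id}_{\delta^1}\ast\xi)=(\mathrm{id}_{\delta^0}\ast\xi)\cdot\beta_1$;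 a lax descent object is $L$ with $d:L\to b$, $\Psi:\delta^1d\Rightarrow\delta^0d$ such that $g\mapsto(dg,\Psi\ast\mathrm{id}_g)$, $\xi\mapsto \mathrm{id}_d\ast\xi$ is an isomorphism $\mathbb{A}(y,L)\cong\mathrm{Desc}_p(y)$ for all $y$; the semantic lax descent factorization is $p=d\,p^H$, with $p^H$ unique such that $dp^H=p$, $\Psi\ast\mathrm{id}_{p^H}=\alpha$. Right Kan extension of $f$ along $g$: a pair $(r,\gamma:rg\Rightarrow f)$ such that $\beta\mapsto\gamma\cdot(\beta\ast\mathrm{id}_g)$ is a bijection from 2-cells $k\Rightarrow r$ to 2-cells $kg\Rightarrow f$ for all $k$; a 1-cell $\delta$ preserves it if $(\delta r,\mathrm{id}_\delta\ast\gamma)$ is a right Kan extension of $\delta f$ along $g$. The codensity monad of $p$ (from a right Kan extension $(t,\gamma)$ of $p$ along $p$) is $(b,t,m,\eta)$ with $m$ unique such that $\gamma\cdot(m\ast\mathrm{id}_p)=\gamma\cdot(\mathrm{id}_t\ast\gamma)$ and $\eta$ unique with $\gamma\cdot(\eta\ast\mathrm{id}_p)=\mathrm{id}_p$. An Eilenberg–Moore object of a monad $(b,t,m,\eta)$ is $b^{\mathsf{T}}$ with $u:b^{\mathsf{T}}\to b$, $\mu:tu\Rightarrow u$ such that $g\mapsto(ug,\mu\ast\mathrm{id}_g)$ is an isomorphism from $\mathbb{A}(y,b^{\mathsf{T}})$ onto the category of pairs $(h,\beta:th\Rightarrow h)$ with $\beta\cdot(\mathrm{id}_t\ast\beta)=\beta\cdot(m\ast\mathrm{id}_h)$,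 $\beta\cdot(\eta\ast\mathrm{id}_h)=\mathrm{id}_h$ (morphisms: $\xi$ with $\xi\cdot\beta_1=\beta_0\cdot(\mathrm{id}_t\ast\xi)$); the semantic factorization of $p$ is $p=u\,p^{\mathsf{T}}$, $p^{\mathsf{T}}$ unique with $up^{\mathsf{T}}=p$, $\mu\ast\mathrm{id}_{p^{\mathsf{T}}}=\gamma$. Duals: a left Kan extension in $\mathbb{A}$ is a right Kan extension in $\mathbb{A}^{\mathrm{co}}$, and it is preserved by a 1-cell if that 1-cell preserves it as a right Kan extension in $\mathbb{A}^{\mathrm{co}}$; the density comonad of $l$ is the codensity monad of $l$ in $\mathbb{A}^{\mathrm{co}}$; its co-Eilenberg–Moore object is its Eilenberg–Moore object in $\mathbb{A}^{\mathrm{co}}$; the co-semantic factorization of $l$ is the semantic factorization of $l$ in $\mathbb{A}^{\mathrm{co}}$. Two factorizations $p=ac$ (through $X$) and $p=a'c'$ (through $X'$) are isomorphic if there is an isomorphism $\varphi:X\to X'$ with $a'\varphi=a$ and $\varphi c=c'$. *)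

(* Strict 2-categories (Cat-enriched categories), presented with a type of
   1-cells Hom a b and a type of 2-cells Cell a b equipped with source and
   target 1-cells.  Vertical / horizontal composition are total operations;
   their laws are only required where the composites make sense. *)
From Stdlib Require Import Utf8.

Set Implicit Arguments.

Record TwoCat := {
  Ob : Type;
  Hom : Ob -> Ob -> Type;
  Cell : Ob -> Ob -> Type;
  src : forall a b, Cell a b -> Hom a b;
  tgt : forall a b, Cell a b -> Hom a b;
  id1 : forall a, Hom a a;
  comp1 : forall a b c, Hom b c -> Hom a b -> Hom a c;
  id2 : forall a b, Hom a b -> Cell a b;
  vcomp : forall a b, Cell a b -> Cell a b -> Cell a b;
  hcomp : forall a b c, Cell b c -> Cell a b -> Cell a c;
  comp1_assoc : forall a b c d (h : Hom c d) (g : Hom b c) (f : Hom a b),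
      comp1 (comp1 h g) f = comp1 h (comp1 g f);
  comp1_id_l : forall a b (f : Hom a b), comp1 (id1 b) f = f;
  comp1_id_r : forall a b (f : Hom a b), comp1 f (id1 a) = f;
  src_id2 : forall a b (f : Hom a b), src (id2 f) = f;
  tgt_id2 : forall a b (f : Hom a b), tgt (id2 f) = f;
  src_vcomp : forall a b (be al : Cell a b), tgt al = src be -> src (vcomp be al) = src al;
  tgt_vcomp : forall a b (be al : Cell a b), tgt al = src be -> tgt (vcomp be al) = tgt be;
  vcomp_assoc : forall a b (ga be al : Cell a b), tgt al = src be -> tgt be = src ga ->
      vcomp (vcomp ga be) al = vcomp ga (vcomp be al);
  vcomp_id_l : forall a b (al : Cell a b), vcomp (id2 (tgt al)) al = al;
  vcomp_id_r : forall a b (al : Cell a b), vcomp al (id2 (src al)) = al;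
  src_hcomp : forall a b c (be : Cell b c) (al : Cell a b),
      src (hcomp be al) = comp1 (src be) (src al);
  tgt_hcomp : forall a b c (be : Cell b c) (al : Cell a b),
      tgt (hcomp be al) = comp1 (tgt be) (tgt al);
  hcomp_assoc : forall a b c d (ga : Cell c d) (be : Cell b c) (al : Cell a b),
      hcomp (hcomp ga be) al = hcomp ga (hcomp be al);
  hcomp_id_l : forall a b (al : Cell a b), hcomp (id2 (id1 b)) al = al;
  hcomp_id_r : forall a b (al : Cell a b), hcomp al (id2 (id1 a)) = al;
  hcomp_id2 : forall a b c (g : Hom b c) (f : Hom a b),
      hcomp (id2 g) (id2 f) = id2 (comp1 g f);
  interchange : forall a b c (be' al' : Cell b c) (be al : Cell a b),
      tgt al' = src be' -> tgt al = src be ->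
      hcomp (vcomp be' al') (vcomp be al) = vcomp (hcomp be' be) (hcomp al' al)
}.

Arguments Hom {t} a b.
Arguments Cell {t} a b.
Arguments src {t a b} _.
Arguments tgt {t a b} _.
Arguments id1 {t} a.
Arguments comp1 {t a b c} _ _.
Arguments id2 {t a b} _.
Arguments vcomp {t a b} _ _.
Arguments hcomp {t a b c} _ _.

Declare Scope twocat_scope.
Open Scope twocat_scope.
Notation "g ∘ f" := (comp1 g f) (at level 40, left associativity) : twocat_scope.
Notation "be · al" := (vcomp be al) (at level 50, left associativity) : twocat_scope.
Notation "be ∗ al" := (hcomp be al) (at level 45, left associativity) : twocat_scope.

Definition co (A : TwoCat) : TwoCat.
Proof.
  refine {| Ob := Ob A; Hom := @Hom A; Cell := @Cell A;
            src := fun a b al => @tgt A a b al; tgt := fun a b al => @src A a b al;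
            id1 := @id1 A; comp1 := @comp1 A; id2 := @id2 A;
            vcomp := fun a b be al => @vcomp A a b al be;
            hcomp := @hcomp A |}.
  - intros; apply comp1_assoc.
  - intros; apply comp1_id_l.
  - intros; apply comp1_id_r.
  - intros; apply tgt_id2.
  - intros; apply src_id2.
  - intros a b be al H; apply tgt_vcomp; symmetry; exact H.
  - intros a b be al H; apply src_vcomp; symmetry; exact H.
  - intros a b ga be al H1 H2; symmetry; apply vcomp_assoc; symmetry; assumption.
  - intros; apply vcomp_id_r.
  - intros; apply vcomp_id_l.
  - intros; apply tgt_hcomp.
  - intros; apply src_hcomp.
  - intros; apply hcomp_assoc.
  - intros; apply hcomp_id_l.
  - intros; apply hcomp_id_r.
  - intros; apply hcomp_id2.
  - intros a b c be' al' be al H1 H2; apply interchange; symmetry; assumption.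
Defined.

Section Notions.
Context {A : TwoCat}.

Definition cell2 {a b : Ob A} (al : Cell a b) (f g : Hom a b) : Prop :=
  src al = f /\ tgt al = g.

Definition OpComma {x z : Ob A} (p : Hom x z) (P : Ob A) (d0 d1 : Hom z P)
    (al : Cell x P) : Prop :=
  cell2 al (d1 ∘ p) (d0 ∘ p) /\
  forall y : Ob A,
    (forall (h0 h1 : Hom z y) (be : Cell x y), cell2 be (h1 ∘ p) (h0 ∘ p) ->
       exists! h : Hom P y, h ∘ d0 = h0 /\ h ∘ d1 = h1 /\ id2 h ∗ al = be) /\
    (forall (h h' : Hom P y) (xi0 xi1 : Cell z y),
       cell2 xi0 (h ∘ d0) (h' ∘ d0) -> cell2 xi1 (h ∘ d1) (h' ∘ d1) ->
       (xi0 ∗ id2 p) · (id2 h ∗ al) = (id2 h' ∗ al) · (xi1 ∗ id2 p) ->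
       exists! xi : Cell P y, cell2 xi h h' /\ xi ∗ id2 d0 = xi0 /\ xi ∗ id2 d1 = xi1).

Definition Pushout2 {c c0 c1 : Ob A} (f0 : Hom c c0) (f1 : Hom c c1) (Pq : Ob A)
    (q0 : Hom c0 Pq) (q1 : Hom c1 Pq) : Prop :=
  q0 ∘ f0 = q1 ∘ f1 /\
  forall y : Ob A,
    (forall (k0 : Hom c0 y) (k1 : Hom c1 y), k0 ∘ f0 = k1 ∘ f1 ->
       exists! k : Hom Pq y, k ∘ q0 = k0 /\ k ∘ q1 = k1) /\
    (forall (k k' : Hom Pq y) (xi0 : Cell c0 y) (xi1 : Cell c1 y),
       cell2 xi0 (k ∘ q0) (k' ∘ q0) -> cell2 xi1 (k ∘ q1) (k' ∘ q1) ->
       xi0 ∗ id2 f0 = xi1 ∗ id2 f1 ->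
       exists! xi : Cell Pq y, cell2 xi k k' /\ xi ∗ id2 q0 = xi0 /\ xi ∗ id2 q1 = xi1).

Definition CokernelDiagram {x z : Ob A} (p : Hom x z) (P : Ob A) (d0 d1 : Hom z P)
    (al : Cell x P) (Q : Ob A) (D0 D1 D2 : Hom P Q) (s0 : Hom P z) : Prop :=
  OpComma p P d0 d1 al /\
  Pushout2 d0 d1 Q D2 D0 /\
  (D1 ∘ d1 = D2 ∘ d1 /\ D1 ∘ d0 = D0 ∘ d0 /\
   id2 D1 ∗ al = (id2 D0 ∗ al) · (id2 D2 ∗ al)) /\
  (s0 ∘ d0 = id1 z /\ s0 ∘ d1 = id1 z /\ id2 s0 ∗ al = id2 p).

Definition DescDatum {z P Q y : Ob A} (d0 d1 : Hom z P) (D0 D1 D2 : Hom P Q)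
    (s0 : Hom P z) (h : Hom y z) (be : Cell y P) : Prop :=
  cell2 be (d1 ∘ h) (d0 ∘ h) /\
  (id2 D0 ∗ be) · (id2 D2 ∗ be) = id2 D1 ∗ be /\
  id2 s0 ∗ be = id2 h.

Definition LaxDescentObject {z P Q : Ob A} (d0 d1 : Hom z P) (D0 D1 D2 : Hom P Q)
    (s0 : Hom P z) (L : Ob A) (d : Hom L z) (Psi : Cell L P) : Prop :=
  DescDatum d0 d1 D0 D1 D2 s0 d Psi /\
  forall y : Ob A,
    (forall (h : Hom y z) (be : Cell y P), DescDatum d0 d1 D0 D1 D2 s0 h be ->
       exists! g : Hom y L, d ∘ g = h /\ Psi ∗ id2 g = be) /\
    (forall (g1 g0 : Hom y L) (xi : Cell y z), cell2 xi (d ∘ g1) (d ∘ g0) ->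
       (Psi ∗ id2 g0) · (id2 d1 ∗ xi) = (id2 d0 ∗ xi) · (Psi ∗ id2 g1) ->
       exists! ze : Cell y L, cell2 ze g1 g0 /\ id2 d ∗ ze = xi).

Definition LaxDescFact {x z : Ob A} (p : Hom x z) (P : Ob A) (d0 d1 : Hom z P)
    (al : Cell x P) (Q : Ob A) (D0 D1 D2 : Hom P Q) (s0 : Hom P z)
    (L : Ob A) (d : Hom L z) (c : Hom x L) : Prop :=
  exists Psi : Cell L P,
    LaxDescentObject d0 d1 D0 D1 D2 s0 L d Psi /\ d ∘ c = p /\ Psi ∗ id2 c = al.

Definition RightKan {x y z : Ob A} (f : Hom x z) (g : Hom x y) (r : Hom y z)
    (ga : Cell x z) : Prop :=
  cell2 ga (r ∘ g) f /\
  forall (k : Hom y z) (de : Cell x z), cell2 de (k ∘ g) f ->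
    exists! be : Cell y z, cell2 be k r /\ ga · (be ∗ id2 g) = de.

Definition PreservesRightKan {x y z w : Ob A} (de : Hom z w) (f : Hom x z)
    (g : Hom x y) (r : Hom y z) (ga : Cell x z) : Prop :=
  RightKan (de ∘ f) g (de ∘ r) (id2 de ∗ ga).

Definition CodensityMonad {x z : Ob A} (p : Hom x z) (t : Hom z z) (ga : Cell x z)
    (m eta : Cell z z) : Prop :=
  RightKan p p t ga /\
  cell2 m (t ∘ t) t /\ ga · (m ∗ id2 p) = ga · (id2 t ∗ ga) /\
  cell2 eta (id1 z) t /\ ga · (eta ∗ id2 p) = id2 p.

Definition Algebra {z y : Ob A} (t : Hom z z) (m eta : Cell z z)
    (h : Hom y z) (be : Cell y z) : Prop :=
  cell2 be (t ∘ h) h /\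
  be · (id2 t ∗ be) = be · (m ∗ id2 h) /\
  be · (eta ∗ id2 h) = id2 h.

Definition EMObject {z : Ob A} (t : Hom z z) (m eta : Cell z z)
    (X : Ob A) (u : Hom X z) (mu : Cell X z) : Prop :=
  Algebra t m eta u mu /\
  forall y : Ob A,
    (forall (h : Hom y z) (be : Cell y z), Algebra t m eta h be ->
       exists! g : Hom y X, u ∘ g = h /\ mu ∗ id2 g = be) /\
    (forall (g1 g0 : Hom y X) (xi : Cell y z), cell2 xi (u ∘ g1) (u ∘ g0) ->
       xi · (mu ∗ id2 g1) = (mu ∗ id2 g0) · (id2 t ∗ xi) ->
       exists! ze : Cell y X, cell2 ze g1 g0 /\ id2 u ∗ ze = xi).

Definition SemFact {x z : Ob A} (p : Hom x z) (t : Hom z z) (ga : Cell x z)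
    (m eta : Cell z z) (X : Ob A) (u : Hom X z) (c : Hom x X) : Prop :=
  exists mu : Cell X z, EMObject t m eta X u mu /\ u ∘ c = p /\ mu ∗ id2 c = ga.

Definition FactIso {x z : Ob A} (X X' : Ob A) (a : Hom X z) (c : Hom x X)
    (a' : Hom X' z) (c' : Hom x X') : Prop :=
  exists (phi : Hom X X') (psi : Hom X' X),
    psi ∘ phi = id1 X /\ phi ∘ psi = id1 X' /\ a' ∘ phi = a /\ phi ∘ c = c'.

End Notions.

Definition LeftKan {A : TwoCat} {x y z : Ob A} (f : Hom x z) (g : Hom x y)
    (r : Hom y z) (ga : Cell x z) : Prop :=
  @RightKan (co A) x y z f g r ga.

Definition PreservesLeftKan {A : TwoCat} {x y z w : Ob A} (de : Hom z w)
    (f : Hom x z) (g : Hom x y) (r : Hom y z) (ga : Cell x z) : Prop :=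
  @PreservesRightKan (co A) x y z w de f g r ga.

Definition DensityComonad {A : TwoCat} {x z : Ob A} (p : Hom x z) (t : Hom z z)
    (ga : Cell x z) (m eta : Cell z z) : Prop :=
  @CodensityMonad (co A) x z p t ga m eta.

Definition CoSemFact {A : TwoCat} {x z : Ob A} (p : Hom x z) (t : Hom z z)
    (ga : Cell x z) (m eta : Cell z z) (X : Ob A) (u : Hom X z) (c : Hom x X) : Prop :=
  @SemFact (co A) x z p t ga m eta X u c.

(* Whiskering with the preserved left Kan extension turns coalgebras of the density
   comonad into descent data.  Let sigma : d1 t => d0 be the unique 2-cell with
   (sigma l) . (d1 ga) = al, and r : P = e↑e -> e the 1-cell induced by (t, 1, ga).  Then
   be : h => t h goes to (sigma h) . (d1 be) : d1 h => d0 h, with inverse the whiskering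
   by r; the counit and coassociativity laws correspond to the normalisation and cocycle
   conditions, and coalgebra morphisms to morphisms of descent data.  Hence Desc_l(y) is
   isomorphic to the category of coalgebras on maps y -> e, naturally in y and over
   A(y, e): a co-Eilenberg-Moore object is the same thing as a lax descent object, with
   the same factorization of l, and such factorizations are unique up to isomorphism. *)

From Stdlib Require Import Setoid.

Set Implicit Arguments.

Lemma exists_unique_eq {T : Type} {Pr : T -> Prop} {x1 x2 : T} :
  (exists! x, Pr x) -> Pr x1 -> Pr x2 -> x1 = x2.
Proof. intros H. exact (proj2 (proj2 (unique_existence Pr) H) x1 x2). Qed.

Lemma exists_unique_iff {T : Type} {Pr Pr' : T -> Prop} :
  (forall x, Pr x <-> Pr' x) -> (exists! x, Pr x) -> exists! x, Pr' x.
Proof.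
  intros E [x [Hx U]]. exists x. split; [apply E; exact Hx|].
  intros y Hy. apply U, E, Hy.
Qed.

(** * Calculus of 2-cells *)

Section TwoCellCalculus.
Context {A : TwoCat}.

Lemma cell2_id2 {x y : Ob A} (f : Hom x y) : cell2 (id2 f) f f.
Proof. split; [apply src_id2 | apply tgt_id2]. Qed.

Lemma cell2_vcomp {x y : Ob A} (a b : Cell x y) f g g' h :
  cell2 a f g -> cell2 b g' h -> g = g' -> cell2 (b · a) f h.
Proof.
  intros [Ha1 Ha2] [Hb1 Hb2] E; subst.
  split; [rewrite src_vcomp | rewrite tgt_vcomp]; congruence.
Qed.

Lemma cell2_hcomp {x y z : Ob A} (b : Cell y z) (a : Cell x y) f g f' g' :
  cell2 a f g -> cell2 b f' g' -> cell2 (b ∗ a) (f' ∘ f) (g' ∘ g).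
Proof.
  intros [Ha1 Ha2] [Hb1 Hb2].
  split; [rewrite src_hcomp | rewrite tgt_hcomp]; congruence.
Qed.

Lemma cell2_congr {x y : Ob A} (a : Cell x y) f g f' g' :
  cell2 a f g -> f = f' -> g = g' -> cell2 a f' g'.
Proof. intros H E1 E2; subst; exact H. Qed.

Lemma cell2_co {x y : Ob A} (a : Cell x y) f g :
  @cell2 (co A) x y a f g <-> cell2 a g f.
Proof. unfold cell2; cbn; tauto. Qed.

Lemma vcomp_id2_l {x y : Ob A} (a : Cell x y) f g : cell2 a f g -> id2 g · a = a.
Proof. intros [H1 H2]; subst; apply vcomp_id_l. Qed.

Lemma vcomp_id2_r {x y : Ob A} (a : Cell x y) f g : cell2 a f g -> a · id2 f = a.
Proof. intros [H1 H2]; subst; apply vcomp_id_r. Qed.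

Lemma vcomp_assoc_cell2 {x y : Ob A} (a b c : Cell x y) f g g' h h' i :
  cell2 a f g -> cell2 b g' h -> cell2 c h' i -> g = g' -> h = h' ->
  (c · b) · a = c · (b · a).
Proof.
  intros [Ha1 Ha2] [Hb1 Hb2] [Hc1 Hc2] E1 E2; subst.
  apply vcomp_assoc; congruence.
Qed.

Lemma interchange_cell2 {x y z : Ob A} (a b : Cell x y) (a' b' : Cell y z)
    f g g' h f' k k' h' :
  cell2 a f g -> cell2 b g' h -> cell2 a' f' k -> cell2 b' k' h' -> g = g' -> k = k' ->
  (b' · a') ∗ (b · a) = (b' ∗ b) · (a' ∗ a).
Proof.
  intros [Ha1 Ha2] [Hb1 Hb2] [Hc1 Hc2] [Hd1 Hd2] E1 E2; subst.
  apply interchange; congruence.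
Qed.

Lemma hcomp_whiskers {x y z : Ob A} (a : Cell x y) (b : Cell y z) f g f' g' :
  cell2 a f g -> cell2 b f' g' -> b ∗ a = (b ∗ id2 g) · (id2 f' ∗ a).
Proof.
  intros Ha Hb.
  rewrite <- (vcomp_id2_r Hb) at 1. rewrite <- (vcomp_id2_l Ha) at 1.
  eapply interchange_cell2; eauto using cell2_id2.
Qed.

Lemma hcomp_whiskers' {x y z : Ob A} (a : Cell x y) (b : Cell y z) f g f' g' :
  cell2 a f g -> cell2 b f' g' -> b ∗ a = (id2 g' ∗ a) · (b ∗ id2 f).
Proof.
  intros Ha Hb.
  rewrite <- (vcomp_id2_l Hb) at 1. rewrite <- (vcomp_id2_r Ha) at 1.
  eapply interchange_cell2; eauto using cell2_id2.
Qed.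

Lemma whisker_l_vcomp {x y z : Ob A} (k : Hom y z) (a b : Cell x y) f g g' h :
  cell2 a f g -> cell2 b g' h -> g = g' ->
  id2 k ∗ (b · a) = (id2 k ∗ b) · (id2 k ∗ a).
Proof.
  intros Ha Hb E. rewrite <- (vcomp_id2_l (cell2_id2 k)) at 1.
  eapply interchange_cell2; eauto using cell2_id2.
Qed.

Lemma whisker_r_vcomp {x y z : Ob A} (k : Hom x y) (a b : Cell y z) f g g' h :
  cell2 a f g -> cell2 b g' h -> g = g' ->
  (b · a) ∗ id2 k = (b ∗ id2 k) · (a ∗ id2 k).
Proof.
  intros Ha Hb E. rewrite <- (vcomp_id2_l (cell2_id2 k)) at 1.
  eapply interchange_cell2; eauto using cell2_id2.
Qed.

Lemma whisker_l_whisker_l {x y z w : Ob A} (g : Hom z w) (f : Hom y z) (a : Cell x y) :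
  id2 g ∗ (id2 f ∗ a) = id2 (g ∘ f) ∗ a.
Proof. rewrite <- hcomp_assoc, hcomp_id2. reflexivity. Qed.

Lemma comp1_eq_rassoc {a b c : Ob A} {f : Hom b c} {g : Hom a b} {k : Hom a c} :
  f ∘ g = k -> forall w (x : Hom w a), f ∘ (g ∘ x) = k ∘ x.
Proof. intros H w x. rewrite <- comp1_assoc, H. reflexivity. Qed.

Lemma hcomp_eq_rassoc {x y z w : Ob A} {a : Cell z w} {b : Cell y z} {c : Cell y w} :
  a ∗ b = c -> forall (v : Cell x y), a ∗ (b ∗ v) = c ∗ v.
Proof. intros H v. rewrite <- hcomp_assoc, H. reflexivity. Qed.

Lemma whisker_r_eq_comp1 {x y z w : Ob A} {a : Cell y z} {f : Hom x y} {c : Cell x z} :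
  a ∗ id2 f = c -> forall (g : Hom w x), a ∗ id2 (f ∘ g) = c ∗ id2 g.
Proof. intros H g. rewrite <- hcomp_id2, <- hcomp_assoc, H. reflexivity. Qed.

Lemma whisker_l_eq_comp1 {x y z w : Ob A} {g : Hom y z} {a : Cell x y} {c : Cell x z} :
  id2 g ∗ a = c -> forall (f : Hom z w), id2 (f ∘ g) ∗ a = id2 f ∗ c.
Proof. intros H f. rewrite <- whisker_l_whisker_l, H. reflexivity. Qed.

End TwoCellCalculus.

Ltac cell_type :=
  match goal with
  | |- cell2 (vcomp _ _) _ _ => eapply cell2_vcomp; [cell_type | cell_type | ]
  | |- cell2 (hcomp _ _) _ _ => eapply cell2_hcomp; [cell_type | cell_type]
  | |- cell2 (id2 _) _ _ => apply cell2_id2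
  | _ => eassumption
  end.

(** * Kan extensions, coalgebras and lax descent objects *)

Section UniversalProperties.
Context {A : TwoCat}.

Lemma left_kan_factor {x y z : Ob A} {f : Hom x z} {g : Hom x y} {r : Hom y z}
    {ga : Cell x z} {k : Hom y z} {de : Cell x z} :
  LeftKan f g r ga -> cell2 de f (k ∘ g) ->
  exists be, cell2 be r k /\ (be ∗ id2 g) · ga = de.
Proof.
  intros [_ U] Hde. apply cell2_co in Hde.
  destruct (U k de Hde) as [be [[Hbe E] _]].
  exists be. split; [apply cell2_co, Hbe | exact E].
Qed.

Lemma left_kan_cancel {x y z : Ob A} {f : Hom x z} {g : Hom x y} {r : Hom y z}
    {ga : Cell x z} {k : Hom y z} {be1 be2 : Cell y z} :
  LeftKan f g r ga -> cell2 be1 r k -> cell2 be2 r k ->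
  (be1 ∗ id2 g) · ga = (be2 ∗ id2 g) · ga -> be1 = be2.
Proof.
  intros [Hga U] H1 H2 E. apply cell2_co in Hga.
  assert (Hde : cell2 ((be1 ∗ id2 g) · ga) f (k ∘ g)) by (cell_type; reflexivity).
  apply cell2_co in Hde, H1, H2.
  apply (exists_unique_eq (U k _ Hde)); split; auto.
Qed.

Lemma exists_unique_cell2_co {x y : Ob A} (f g : Hom x y) (Pr : Cell x y -> Prop) :
  (exists! a, @cell2 (co A) x y a g f /\ Pr a) <-> (exists! a, cell2 a f g /\ Pr a).
Proof.
  split; apply exists_unique_iff; intros a; rewrite cell2_co; reflexivity.
Qed.

Definition Coalgebra {e y : Ob A} (t : Hom e e) (m eta : Cell e e)
    (h : Hom y e) (be : Cell y e) : Prop :=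
  cell2 be h (t ∘ h) /\
  (id2 t ∗ be) · be = (m ∗ id2 h) · be /\
  (eta ∗ id2 h) · be = id2 h.

Lemma algebra_co_iff {e y : Ob A} (t : Hom e e) (m eta : Cell e e)
    (h : Hom y e) (be : Cell y e) :
  @Algebra (co A) e y t m eta h be <-> Coalgebra t m eta h be.
Proof. unfold Algebra, Coalgebra. rewrite cell2_co. reflexivity. Qed.

Lemma cokernel_desc_datum {x z : Ob A} (p : Hom x z) P d0 d1 al Q
    (D0 D1 D2 : Hom P Q) s0 :
  CokernelDiagram p P d0 d1 al Q D0 D1 D2 s0 -> DescDatum d0 d1 D0 D1 D2 s0 p al.
Proof.
  intros [[Hal _] [_ [[_ [_ HD1]] [_ [_ Hs0]]]]].
  split; [exact Hal | split; [symmetry; exact HD1 | exact Hs0]].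
Qed.

Section LaxDescentUnique.
Context {z P Q : Ob A} (d0 d1 : Hom z P) (D0 D1 D2 : Hom P Q) (s0 : Hom P z).

Lemma lax_descent_endo_id {L : Ob A} {d : Hom L z} {Psi : Cell L P} {g : Hom L L} :
  LaxDescentObject d0 d1 D0 D1 D2 s0 L d Psi ->
  d ∘ g = d -> Psi ∗ id2 g = Psi -> g = id1 L.
Proof.
  intros [HPsi U] E1 E2.
  apply (exists_unique_eq (proj1 (U L) d Psi HPsi)); split; auto.
  - apply comp1_id_r.
  - apply hcomp_id_r.
Qed.

Lemma lax_desc_fact_iso {x : Ob A} (p : Hom x z) (al : Cell x P) (L L' : Ob A)
    (d : Hom L z) (d' : Hom L' z) (c : Hom x L) (c' : Hom x L') :
  DescDatum d0 d1 D0 D1 D2 s0 p al ->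
  LaxDescFact p P d0 d1 al Q D0 D1 D2 s0 L d c ->
  LaxDescFact p P d0 d1 al Q D0 D1 D2 s0 L' d' c' ->
  FactIso L L' d c d' c'.
Proof.
  intros Hal [Psi [HL [Hdc HPc]]] [Psi' [HL' [Hdc' HPc']]].
  destruct (proj1 (proj2 HL' L) d Psi (proj1 HL)) as [phi [[Hphi1 Hphi2] _]].
  destruct (proj1 (proj2 HL L') d' Psi' (proj1 HL')) as [psi [[Hpsi1 Hpsi2] _]].
  exists phi, psi. split; [|split; [|split]].
  - apply (lax_descent_endo_id HL).
    + rewrite <- comp1_assoc, Hpsi1, Hphi1. reflexivity.
    + rewrite <- hcomp_id2, <- hcomp_assoc, Hpsi2, Hphi2. reflexivity.
  - apply (lax_descent_endo_id HL').
    + rewrite <- comp1_assoc, Hphi1, Hpsi1. reflexivity.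
    + rewrite <- hcomp_id2, <- hcomp_assoc, Hphi2, Hpsi2. reflexivity.
  - exact Hphi1.
  - apply (exists_unique_eq (proj1 (proj2 HL' x) p al Hal)); split.
    + rewrite <- comp1_assoc, Hphi1. exact Hdc.
    + rewrite <- hcomp_id2, <- hcomp_assoc, Hphi2. exact HPc.
    + exact Hdc'.
    + exact HPc'.
Qed.

End LaxDescentUnique.
End UniversalProperties.

(** * Coalgebras of the density comonad as descent data *)

Section Comparison.
Context {A : TwoCat} {b e P Q : Ob A} {l : Hom b e} {d0 d1 : Hom e P} {al : Cell b P}
  {D0 D1 D2 : Hom P Q} {s0 : Hom P e} {t : Hom e e} {ga : Cell b e} {m eta : Cell e e}.
Hypothesis cokernel : CokernelDiagram l P d0 d1 al Q D0 D1 D2 s0.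
Hypothesis comonad : DensityComonad l t ga m eta.
Hypothesis preserved : PreservesLeftKan d1 l l t ga.

Let opcomma : OpComma l P d0 d1 al := proj1 cokernel.
Let pushout : Pushout2 d0 d1 Q D2 D0 := proj1 (proj2 cokernel).
Let al_cell : cell2 al (d1 ∘ l) (d0 ∘ l) := proj1 opcomma.
Let D2_d0 : D2 ∘ d0 = D0 ∘ d1 := proj1 pushout.
Let D1_d1 : D1 ∘ d1 = D2 ∘ d1 := proj1 (proj1 (proj2 (proj2 cokernel))).
Let D1_d0 : D1 ∘ d0 = D0 ∘ d0 := proj1 (proj2 (proj1 (proj2 (proj2 cokernel)))).
Let D1_al : id2 D1 ∗ al = (id2 D0 ∗ al) · (id2 D2 ∗ al) :=
  proj2 (proj2 (proj1 (proj2 (proj2 cokernel)))).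
Let s0_d0 : s0 ∘ d0 = id1 e := proj1 (proj2 (proj2 (proj2 cokernel))).
Let s0_d1 : s0 ∘ d1 = id1 e := proj1 (proj2 (proj2 (proj2 (proj2 cokernel)))).
Let s0_al : id2 s0 ∗ al = id2 l := proj2 (proj2 (proj2 (proj2 (proj2 cokernel)))).

Let kan : LeftKan l l t ga := proj1 comonad.
Let ga_cell : cell2 ga l (t ∘ l) := proj1 (cell2_co _ _ _) (proj1 kan).
Let m_cell : cell2 m t (t ∘ t) := proj1 (cell2_co _ _ _) (proj1 (proj2 comonad)).
Let m_ga : (m ∗ id2 l) · ga = (id2 t ∗ ga) · ga := proj1 (proj2 (proj2 comonad)).
Let eta_cell : cell2 eta t (id1 e) :=
  proj1 (cell2_co _ _ _) (proj1 (proj2 (proj2 (proj2 comonad)))).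
Let eta_ga : (eta ∗ id2 l) · ga = id2 l := proj2 (proj2 (proj2 (proj2 comonad))).
Let d1_kan : LeftKan (d1 ∘ l) l (d1 ∘ t) (id2 d1 ∗ ga) := preserved.

Lemma r_exists : exists r : Hom P e, r ∘ d0 = t /\ r ∘ d1 = id1 e /\ id2 r ∗ al = ga.
Proof.
  destruct (proj1 (proj2 opcomma e) t (id1 e) ga) as [r [Hr _]].
  - apply (cell2_congr ga_cell); [symmetry; apply comp1_id_l | reflexivity].
  - exists r. exact Hr.
Qed.

Context {r : Hom P e}.
Hypothesis r_spec : r ∘ d0 = t /\ r ∘ d1 = id1 e /\ id2 r ∗ al = ga.
Let r_d0 : r ∘ d0 = t := proj1 r_spec.
Let r_d1 : r ∘ d1 = id1 e := proj1 (proj2 r_spec).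
Let r_al : id2 r ∗ al = ga := proj2 (proj2 r_spec).

Lemma sigma_exists :
  exists sigma : Cell e P, cell2 sigma (d1 ∘ t) d0 /\ (sigma ∗ id2 l) · (id2 d1 ∗ ga) = al.
Proof. exact (left_kan_factor d1_kan al_cell). Qed.

Context {sigma : Cell e P}.
Hypothesis sigma_spec : cell2 sigma (d1 ∘ t) d0 /\ (sigma ∗ id2 l) · (id2 d1 ∗ ga) = al.
Let sigma_cell : cell2 sigma (d1 ∘ t) d0 := proj1 sigma_spec.
Let sigma_ga : (sigma ∗ id2 l) · (id2 d1 ∗ ga) = al := proj2 sigma_spec.

Lemma xi_exists :
  exists xi : Cell P P, cell2 xi (d1 ∘ r) (id1 P) /\ xi ∗ id2 d0 = sigma /\ xi ∗ id2 d1 = id2 d1.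
Proof.
  destruct (proj2 (proj2 opcomma P) (d1 ∘ r) (id1 P) sigma (id2 d1)) as [xi [Hxi _]].
  - apply (cell2_congr sigma_cell).
    + rewrite comp1_assoc, r_d0. reflexivity.
    + symmetry. apply comp1_id_l.
  - apply (cell2_congr (cell2_id2 d1)).
    + rewrite comp1_assoc, r_d1, comp1_id_r. reflexivity.
    + symmetry. apply comp1_id_l.
  - rewrite (whisker_l_eq_comp1 r_al), sigma_ga, hcomp_id_l, hcomp_id2.
    symmetry. exact (vcomp_id2_r al_cell).
  - exists xi. exact Hxi.
Qed.

Context {xi : Cell P P}.
Hypothesis xi_spec : cell2 xi (d1 ∘ r) (id1 P) /\ xi ∗ id2 d0 = sigma /\ xi ∗ id2 d1 = id2 d1.
Let xi_cell : cell2 xi (d1 ∘ r) (id1 P) := proj1 xi_spec.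
Let xi_d0 : xi ∗ id2 d0 = sigma := proj1 (proj2 xi_spec).
Let xi_d1 : xi ∗ id2 d1 = id2 d1 := proj2 (proj2 xi_spec).

Lemma R_exists : exists R : Hom Q P, R ∘ D2 = id1 P /\ R ∘ D0 = d0 ∘ r.
Proof.
  destruct (proj1 (proj2 pushout P) (id1 P) (d0 ∘ r)) as [R [HR _]].
  - rewrite comp1_id_l, comp1_assoc, r_d1, comp1_id_r. reflexivity.
  - exists R. exact HR.
Qed.

Context {R : Hom Q P}.
Hypothesis R_spec : R ∘ D2 = id1 P /\ R ∘ D0 = d0 ∘ r.
Let R_D2 : R ∘ D2 = id1 P := proj1 R_spec.
Let R_D0 : R ∘ D0 = d0 ∘ r := proj2 R_spec.

Lemma eps_exists :
  exists eps : Cell Q Q,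
    cell2 eps (D2 ∘ R) (id1 Q) /\ eps ∗ id2 D2 = id2 D2 /\ eps ∗ id2 D0 = id2 D0 ∗ xi.
Proof.
  destruct (proj2 (proj2 pushout Q) (D2 ∘ R) (id1 Q) (id2 D2) (id2 D0 ∗ xi))
    as [eps [Heps _]].
  - apply (cell2_congr (cell2_id2 D2)).
    + rewrite comp1_assoc, R_D2, comp1_id_r. reflexivity.
    + symmetry. apply comp1_id_l.
  - apply (cell2_congr (cell2_hcomp xi_cell (cell2_id2 D0))).
    + rewrite comp1_assoc, R_D0, <- !comp1_assoc, D2_d0. reflexivity.
    + rewrite comp1_id_l, comp1_id_r. reflexivity.
  - rewrite hcomp_assoc, xi_d1, !hcomp_id2, D2_d0. reflexivity.
  - exists eps. exact Heps.
Qed.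

Context {eps : Cell Q Q}.
Hypothesis eps_spec :
  cell2 eps (D2 ∘ R) (id1 Q) /\ eps ∗ id2 D2 = id2 D2 /\ eps ∗ id2 D0 = id2 D0 ∗ xi.
Let eps_cell : cell2 eps (D2 ∘ R) (id1 Q) := proj1 eps_spec.
Let eps_D2 : eps ∗ id2 D2 = id2 D2 := proj1 (proj2 eps_spec).
Let eps_D0 : eps ∗ id2 D0 = id2 D0 ∗ xi := proj2 (proj2 eps_spec).

Ltac hom_norm := repeat progress rewrite ?comp1_assoc, ?comp1_id_l, ?comp1_id_r,
  ?s0_d0, ?(comp1_eq_rassoc s0_d0), ?s0_d1, ?(comp1_eq_rassoc s0_d1),
  ?D2_d0, ?(comp1_eq_rassoc D2_d0), ?D1_d1, ?(comp1_eq_rassoc D1_d1),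
  ?D1_d0, ?(comp1_eq_rassoc D1_d0), ?r_d0, ?(comp1_eq_rassoc r_d0),
  ?r_d1, ?(comp1_eq_rassoc r_d1), ?R_D2, ?(comp1_eq_rassoc R_D2),
  ?R_D0, ?(comp1_eq_rassoc R_D0).
Ltac hom_eq := hom_norm; reflexivity.
Ltac typed := eapply cell2_congr; [cell_type | ..]; hom_eq.
Ltac side_cond := match goal with |- cell2 _ _ _ => typed | |- _ = _ => hom_eq end.
Ltac hcomp_norm := rewrite ?hcomp_assoc, ?whisker_l_whisker_l, ?hcomp_id2, ?hcomp_id_l,
  ?hcomp_id_r.
Ltac cell_norm := repeat (first [progress hcomp_norm | progress hom_norm]).
Ltac whisker_distr :=
  repeat (first [erewrite whisker_l_vcomp by side_cond | erewrite whisker_r_vcomp by side_cond]).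
Ltac vcomp_rassoc := repeat (erewrite vcomp_assoc_cell2 by side_cond).
Ltac cell_nf := cell_norm; whisker_distr; cell_norm; vcomp_rassoc.
Ltac vcomp_unit :=
  repeat (first [erewrite vcomp_id2_l by side_cond | erewrite vcomp_id2_r by side_cond]).

Lemma r_sigma : id2 r ∗ sigma = id2 t.
Proof.
  apply (left_kan_cancel (k := t) kan); [typed | typed |].
  assert (E : id2 r ∗ al = (id2 r ∗ (sigma ∗ id2 l)) · ga).
  { rewrite <- sigma_ga. erewrite whisker_l_vcomp by side_cond. cell_norm. reflexivity. }
  rewrite r_al in E. cell_norm. rewrite <- E. symmetry. exact (vcomp_id2_l ga_cell).
Qed.

Lemma s0_sigma : id2 s0 ∗ sigma = eta.
Proof.
  apply (left_kan_cancel (k := id1 e) kan); [typed | typed |].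
  assert (E : id2 s0 ∗ al = (id2 s0 ∗ (sigma ∗ id2 l)) · ga).
  { rewrite <- sigma_ga. erewrite whisker_l_vcomp by side_cond. cell_norm. reflexivity. }
  rewrite s0_al in E.
  cell_norm. rewrite <- E. symmetry. exact eta_ga.
Qed.

Definition desc_of_coalg {y : Ob A} (h : Hom y e) (be : Cell y e) : Cell y P :=
  (sigma ∗ id2 h) · (id2 d1 ∗ be).

Lemma r_desc_of_coalg {y : Ob A} {h h' : Hom y e} {be : Cell y e} :
  cell2 be h (t ∘ h') -> id2 r ∗ desc_of_coalg h' be = be.
Proof.
  intros Hbe. unfold desc_of_coalg. cell_nf.
  rewrite (hcomp_eq_rassoc r_sigma). cell_norm. exact (vcomp_id2_l Hbe).
Qed.

Lemma desc_of_coalg_r {y : Ob A} {h h' : Hom y e} {be : Cell y P} :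
  cell2 be (d1 ∘ h) (d0 ∘ h') -> desc_of_coalg h' (id2 r ∗ be) = be.
Proof.
  intros Hbe. unfold desc_of_coalg. cell_nf. rewrite <- xi_d0. cell_norm.
  rewrite <- (hcomp_whiskers Hbe xi_cell), (hcomp_whiskers' Hbe xi_cell). cell_norm.
  rewrite (whisker_r_eq_comp1 xi_d1). cell_norm. exact (vcomp_id2_r Hbe).
Qed.

Lemma desc_of_coalg_inj {y : Ob A} {h h' : Hom y e} {be be' : Cell y e} :
  cell2 be h (t ∘ h') -> cell2 be' h (t ∘ h') ->
  desc_of_coalg h' be = desc_of_coalg h' be' -> be = be'.
Proof.
  intros Hbe Hbe' E.
  rewrite <- (r_desc_of_coalg Hbe), <- (r_desc_of_coalg Hbe'), E. reflexivity.
Qed.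

Lemma s0_desc_of_coalg {y : Ob A} {h h' : Hom y e} {be : Cell y e} :
  cell2 be h (t ∘ h') -> id2 s0 ∗ desc_of_coalg h' be = (eta ∗ id2 h') · be.
Proof.
  intros Hbe. unfold desc_of_coalg. cell_nf. rewrite (hcomp_eq_rassoc s0_sigma). cell_norm.
  reflexivity.
Qed.

Lemma desc_of_coalg_whisker {y w : Ob A} {h f : Hom y e} {be : Cell y e} (g : Hom w y) :
  cell2 be f (t ∘ h) -> desc_of_coalg h be ∗ id2 g = desc_of_coalg (h ∘ g) (be ∗ id2 g).
Proof. intros Hbe. unfold desc_of_coalg. cell_nf. reflexivity. Qed.

(* Both sides are [eps ∗ X], expanded by the two interchange laws: a 2-cell of this
   shape into [Q] is determined by its whiskering with [R]. *)
Lemma pushout_cell_factor {g : Hom e e} (X : Cell e Q) :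
  cell2 X (D2 ∘ (d1 ∘ g)) (D0 ∘ d0) -> X = (id2 D0 ∗ sigma) · (id2 D2 ∗ (id2 R ∗ X)).
Proof.
  intros HX. transitivity (eps ∗ X).
  - rewrite (hcomp_whiskers' HX eps_cell), (whisker_r_eq_comp1 eps_D2). cell_norm.
    symmetry. exact (vcomp_id2_r HX).
  - rewrite (hcomp_whiskers HX eps_cell), (whisker_r_eq_comp1 eps_D0). cell_norm.
    rewrite xi_d0. reflexivity.
Qed.

Definition sigma2 : Cell e Q := (id2 D0 ∗ sigma) · (id2 D2 ∗ (sigma ∗ id2 t)).

(* The comultiplication enters here: whiskered by [R], both sides are 2-cells
   d1 t => d0 t which agree after pasting with the preserved Kan extension [d1 ga],
   by the defining equation of [m]. *)
Lemma D1_sigma : id2 D1 ∗ sigma = sigma2 · (id2 (D2 ∘ d1) ∗ m).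
Proof.
  rewrite (pushout_cell_factor (g := t) (X := id2 D1 ∗ sigma)) by typed.
  rewrite (pushout_cell_factor (g := t) (X := sigma2 · (id2 (D2 ∘ d1) ∗ m)))
    by (unfold sigma2; typed).
  f_equal; f_equal.
  apply (left_kan_cancel (k := d0 ∘ t) d1_kan); [unfold sigma2; typed ..|].
  assert (E : (id2 (R ∘ D1) ∗ (sigma ∗ id2 l)) · (id2 d1 ∗ ga) = (id2 d0 ∗ ga) · al).
  { transitivity (id2 (R ∘ D1) ∗ al).
    - rewrite <- sigma_ga. cell_nf. reflexivity.
    - rewrite <- whisker_l_whisker_l, D1_al. cell_nf. rewrite (whisker_l_eq_comp1 r_al).
      reflexivity. }
  unfold sigma2. cell_nf. rewrite E.
  rewrite (hcomp_eq_rassoc (whisker_l_eq_comp1 r_sigma d0)). cell_norm. vcomp_unit.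
  erewrite <- (whisker_l_vcomp d1 (a := ga) (b := m ∗ id2 l)) by side_cond.
  rewrite m_ga. erewrite whisker_l_vcomp by side_cond. cell_norm.
  erewrite <- (vcomp_assoc_cell2 (a := id2 d1 ∗ ga)) by side_cond.
  rewrite <- (hcomp_whiskers ga_cell sigma_cell), (hcomp_whiskers' ga_cell sigma_cell).
  vcomp_rassoc. rewrite sigma_ga. reflexivity.
Qed.

Lemma desc_of_coalg_cocycle {y : Ob A} (h : Hom y e) (be : Cell y e) :
  cell2 be h (t ∘ h) ->
  (id2 D0 ∗ desc_of_coalg h be) · (id2 D2 ∗ desc_of_coalg h be) =
  (sigma2 ∗ id2 h) · (id2 (D2 ∘ d1) ∗ ((id2 t ∗ be) · be)).
Proof.
  intros Hbe. assert (HS : cell2 (id2 D2 ∗ sigma) (D2 ∘ (d1 ∘ t)) (D2 ∘ d0)) by typed.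
  assert (swap : (id2 (D0 ∘ d1) ∗ be) · (id2 D2 ∗ (sigma ∗ id2 h)) =
                 (id2 D2 ∗ (sigma ∗ id2 (t ∘ h))) · (id2 (D2 ∘ (d1 ∘ t)) ∗ be)).
  { transitivity ((id2 D2 ∗ sigma) ∗ be).
    - rewrite (hcomp_whiskers' Hbe HS). cell_norm. reflexivity.
    - rewrite (hcomp_whiskers Hbe HS). cell_norm. reflexivity. }
  unfold desc_of_coalg, sigma2. cell_nf.
  erewrite <- (vcomp_assoc_cell2 (a := id2 (D2 ∘ d1) ∗ be)) by side_cond.
  rewrite swap. vcomp_rassoc. reflexivity.
Qed.

Lemma D1_desc_of_coalg {y : Ob A} (h : Hom y e) (be : Cell y e) :
  cell2 be h (t ∘ h) ->
  id2 D1 ∗ desc_of_coalg h be = (sigma2 ∗ id2 h) · (id2 (D2 ∘ d1) ∗ ((m ∗ id2 h) · be)).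
Proof.
  intros Hbe. unfold desc_of_coalg. erewrite whisker_l_vcomp by side_cond.
  rewrite (hcomp_eq_rassoc D1_sigma). unfold sigma2. cell_nf. reflexivity.
Qed.

Lemma r_R_sigma2 {y : Ob A} (h : Hom y e) (X : Cell y e) :
  cell2 X h (t ∘ (t ∘ h)) ->
  id2 (r ∘ R) ∗ ((sigma2 ∗ id2 h) · (id2 (D2 ∘ d1) ∗ X)) = X.
Proof.
  intros HX. unfold sigma2. cell_nf.
  rewrite (hcomp_eq_rassoc (whisker_l_eq_comp1 r_sigma t)), (hcomp_eq_rassoc r_sigma).
  cell_norm. vcomp_unit. reflexivity.
Qed.

Lemma desc_datum_of_coalg {y : Ob A} (h : Hom y e) (be : Cell y e) :
  Coalgebra t m eta h be -> DescDatum d0 d1 D0 D1 D2 s0 h (desc_of_coalg h be).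
Proof.
  intros [Hbe [Hco Hcu]]. split; [|split].
  - unfold desc_of_coalg. typed.
  - rewrite (desc_of_coalg_cocycle Hbe), (D1_desc_of_coalg Hbe), Hco. reflexivity.
  - rewrite (s0_desc_of_coalg Hbe). exact Hcu.
Qed.

(* The cocycle condition lives in 2-cells into [Q]; whiskering by [r ∘ R] turns it
   back into coassociativity. *)
Lemma coalg_of_desc_datum {y : Ob A} (h : Hom y e) (be : Cell y P) :
  DescDatum d0 d1 D0 D1 D2 s0 h be -> Coalgebra t m eta h (id2 r ∗ be).
Proof.
  intros [Hbe [Hcoc Hnorm]].
  assert (Hrbe : cell2 (id2 r ∗ be) h (t ∘ h)) by typed.
  rewrite <- (desc_of_coalg_r Hbe) in Hcoc, Hnorm.
  split; [exact Hrbe | split].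
  - rewrite (desc_of_coalg_cocycle Hrbe), (D1_desc_of_coalg Hrbe) in Hcoc.
    apply (f_equal (fun X => id2 (r ∘ R) ∗ X)) in Hcoc.
    rewrite !r_R_sigma2 in Hcoc by typed. exact Hcoc.
  - rewrite (s0_desc_of_coalg Hrbe) in Hnorm. exact Hnorm.
Qed.

Lemma desc_of_coalg_mor_iff {y : Ob A} {h0 h1 : Hom y e} {be0 be1 x : Cell y e} :
  cell2 be0 h0 (t ∘ h0) -> cell2 be1 h1 (t ∘ h1) -> cell2 x h1 h0 ->
  be0 · x = (id2 t ∗ x) · be1 <->
  desc_of_coalg h0 be0 · (id2 d1 ∗ x) = (id2 d0 ∗ x) · desc_of_coalg h1 be1.
Proof.
  intros H0 H1 Hx.
  assert (E0 : desc_of_coalg h0 be0 · (id2 d1 ∗ x) = desc_of_coalg h0 (be0 · x)).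
  { unfold desc_of_coalg. cell_nf. reflexivity. }
  assert (E1 : (id2 d0 ∗ x) · desc_of_coalg h1 be1 = desc_of_coalg h0 ((id2 t ∗ x) · be1)).
  { unfold desc_of_coalg. cell_nf.
    erewrite <- (vcomp_assoc_cell2 (a := id2 d1 ∗ be1)) by side_cond.
    rewrite <- (hcomp_whiskers' Hx sigma_cell), (hcomp_whiskers Hx sigma_cell).
    cell_norm. vcomp_rassoc. reflexivity. }
  rewrite E0, E1. split; intros E.
  - rewrite E. reflexivity.
  - eapply desc_of_coalg_inj; [typed | typed | exact E].
Qed.

Lemma coEM_iff_lax_descent {X : Ob A} (u : Hom X e) (mu : Cell X e) :
  Coalgebra t m eta u mu ->
  @EMObject (co A) e t m eta X u mu <->
  LaxDescentObject d0 d1 D0 D1 D2 s0 X u (desc_of_coalg u mu).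
Proof.
  intros Hmu. assert (mu_cell := proj1 Hmu).
  assert (whisker : forall y (g : Hom y X),
             desc_of_coalg u mu ∗ id2 g = desc_of_coalg (u ∘ g) (mu ∗ id2 g))
    by (intros; exact (desc_of_coalg_whisker g mu_cell)).
  unfold EMObject, LaxDescentObject. rewrite algebra_co_iff.
  split; intros [_ U]; (split; [assumption || exact (desc_datum_of_coalg Hmu) |]);
    intros y; destruct (U y) as [U1 U2]; split.
  - intros h be Hbe. assert (be_cell := proj1 Hbe).
    apply (exists_unique_iff (Pr := fun g => u ∘ g = h /\ mu ∗ id2 g = id2 r ∗ be)).
    + intros g. rewrite whisker. split; intros [Hg E]; split; try exact Hg; subst h.
      * rewrite E. exact (desc_of_coalg_r be_cell).
      * eapply desc_of_coalg_inj; [typed | typed |].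
        rewrite E. symmetry. exact (desc_of_coalg_r be_cell).
    + apply U1, algebra_co_iff, coalg_of_desc_datum, Hbe.
  - intros g1 g0 x Hx Hmor.
    apply exists_unique_cell2_co, U2; [apply cell2_co, Hx |].
    change ((mu ∗ id2 g0) · x = (id2 t ∗ x) · (mu ∗ id2 g1)).
    apply (desc_of_coalg_mor_iff (h0 := u ∘ g0) (h1 := u ∘ g1)); [typed | typed | exact Hx |].
    rewrite <- !whisker. exact Hmor.
  - intros h be Hbe. apply algebra_co_iff in Hbe.
    apply (exists_unique_iff
             (Pr := fun g => u ∘ g = h /\ desc_of_coalg u mu ∗ id2 g = desc_of_coalg h be)
             (Pr' := fun g => u ∘ g = h /\ mu ∗ id2 g = be)).
    + intros g. rewrite whisker. split; intros [Hg E]; split; try exact Hg; subst h.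
      * apply (desc_of_coalg_inj (h := u ∘ g) (h' := u ∘ g)); [typed | apply Hbe | exact E].
      * rewrite E. reflexivity.
    + apply U1, desc_datum_of_coalg, Hbe.
  - intros g1 g0 x Hx Hmor. apply cell2_co in Hx.
    apply exists_unique_cell2_co, U2; [exact Hx |]. rewrite !whisker.
    apply (desc_of_coalg_mor_iff (h0 := u ∘ g1) (h1 := u ∘ g0)); [typed | typed | exact Hx |].
    exact Hmor.
Qed.

Lemma lax_desc_fact_of_co_sem_fact {X : Ob A} (u : Hom X e) (c : Hom b X) :
  CoSemFact l t ga m eta X u c -> LaxDescFact l P d0 d1 al Q D0 D1 D2 s0 X u c.
Proof.
  intros [mu [HEM [Huc Hmc]]].
  change (u ∘ c = l) in Huc. change (@hcomp A _ _ _ mu (id2 c) = ga) in Hmc.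
  assert (Hmu : Coalgebra t m eta u mu) by exact (proj1 (algebra_co_iff _ _ _ _ _) (proj1 HEM)).
  exists (desc_of_coalg u mu). split; [apply coEM_iff_lax_descent; assumption |].
  split; [exact Huc |].
  rewrite (desc_of_coalg_whisker c (proj1 Hmu)), Huc, Hmc. exact sigma_ga.
Qed.

Lemma co_sem_fact_of_lax_desc_fact {L : Ob A} (d : Hom L e) (c : Hom b L) :
  LaxDescFact l P d0 d1 al Q D0 D1 D2 s0 L d c -> CoSemFact l t ga m eta L d c.
Proof.
  intros [Psi [HL [Hdc HPc]]].
  assert (HPsi := proj1 HL).
  exists (id2 r ∗ Psi). split; [| split; [exact Hdc |]].
  - apply coEM_iff_lax_descent; [exact (coalg_of_desc_datum HPsi) |].
    rewrite (desc_of_coalg_r (proj1 HPsi)). exact HL.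
  - change ((id2 r ∗ Psi) ∗ id2 c = ga). rewrite hcomp_assoc, HPc. exact r_al.
Qed.

End Comparison.

Theorem theorem4p9 (A : TwoCat) (b e : Ob A) (l : Hom b e)
    (P : Ob A) (d0 d1 : Hom e P) (al : Cell b P)
    (Q : Ob A) (D0 D1 D2 : Hom P Q) (s0 : Hom P e)
    (t : Hom e e) (ga : Cell b e) (m eta : Cell e e) :
  CokernelDiagram l P d0 d1 al Q D0 D1 D2 s0 ->
  LeftKan l l t ga ->
  PreservesLeftKan d1 l l t ga ->
  DensityComonad l t ga m eta ->
  ((exists (X : Ob A) (u : Hom X e) (c : Hom b X), CoSemFact l t ga m eta X u c) <->
   (exists (L : Ob A) (d : Hom L e) (c : Hom b L),
       LaxDescFact l P d0 d1 al Q D0 D1 D2 s0 L d c)) /\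
  (forall (X : Ob A) (u : Hom X e) (c : Hom b X) (L : Ob A) (d : Hom L e) (c' : Hom b L),
     CoSemFact l t ga m eta X u c ->
     LaxDescFact l P d0 d1 al Q D0 D1 D2 s0 L d c' ->
     FactIso X L u c d c').
Proof.
  (* The Kan extension is also the first component of [DensityComonad]. *)
  intros cokernel _ preserved comonad.
  destruct (r_exists cokernel comonad) as [r Hr].
  destruct (sigma_exists cokernel preserved) as [sigma Hsigma].
  destruct (xi_exists cokernel Hr Hsigma) as [xi Hxi].
  destruct (R_exists cokernel Hr) as [R HR].
  destruct (eps_exists cokernel Hxi HR) as [eps Heps].
  assert (to_desc : forall X u c, CoSemFact l t ga m eta X u c ->
                                 LaxDescFact l P d0 d1 al Q D0 D1 D2 s0 X u c)
    by (intros; eapply lax_desc_fact_of_co_sem_fact; eassumption).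
  assert (to_co_sem : forall L d c, LaxDescFact l P d0 d1 al Q D0 D1 D2 s0 L d c ->
                                    CoSemFact l t ga m eta L d c)
    by (intros; eapply co_sem_fact_of_lax_desc_fact; eassumption).
  split; [split|].
  - intros [X [u [c H]]]. exists X, u, c. exact (to_desc X u c H).
  - intros [L [d [c H]]]. exists L, d, c. exact (to_co_sem L d c H).
  - intros X u c L d c' Hsem Hdesc.
    exact (lax_desc_fact_iso (cokernel_desc_datum cokernel) (to_desc X u c Hsem) Hdesc).
Qed.
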